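(* The concrete category $(\text{VBIO-SET},U)$ over $\mathrm{SET}\times\mathcal D$, where $U$ is the forgetful functor $(X,L,i_{XL})\mapsto (X,L)$, $(f,\phi)\mapsto(f,\phi)$, is a topological category: every $U$-structured source $\big((X,L),((f_\lambda,\phi_\lambda):(X,L)\to U(Y_\lambda,M_\lambda,i_{Y_\lambda M_\lambda}))_{\lambda\in\Lambda}\big)$ has a unique $U$-initial lift.
   Context: A complete quasi-monoidal lattice (cqm-lattice) is a triple $(L,\le,\otimes)$ where $(L,\le)$ is a complete lattice with top $\top$ and bottom $\bot$, and $\otimes:L\times L\to L$ is isotone in both arguments with $\top\otimes\top=\top$. $\mathrm{CQML}$ is the category of cqm-lattices whose morphisms are maps preserving $\otimes$, $\top$ and arbitrary joins. Fix a subcategory $\mathcal D$ of $\mathrm{CQML}$. The category $\mathrm{SET}\times\mathcal D$ has objects pairs $(X,L)$ with $X$ a set and $L$ an object of $\mathcal D$; a morphism $(f,\phi):(X,L)\to(Y,M)$ consists of a function $f:X\to Y$ and a $\mathcal D$-morphism $\phi^{op}:M\to L$; composition is $(g,\psi)\circ(f,\phi)=(g\circ f,\psi\circ\phi)$ with lattice part $\phi^{op}\circ\psi^{op}$, identities $(\mathrm{id}_X,\mathrm{id}_L)$. $L^X$ is the set of maps $X\to L$ ordered pointwise; $1_X$ is the constant map with value $\top$. The backward operator is $(f,\phi)^{\leftarrow}:M^Y\to L^X$, $(f,\phi)^{\leftarrow}(b)=\phi^{op}\circ b\circ f$. An interior map on $(X,L)$ is a map $i:L^X\to L^X$ with (I1)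 $i(u)\le u$; (I2) $u\le v\Rightarrow i(u)\le i(v)$; (I3) $i(1_X)=1_X$. A morphism $(f,\phi):(X,L)\to(Y,M)$ is fuzzy $I$-continuous from $(X,L,i_{XL})$ to $(Y,M,i_{YM})$ if $(f,\phi)^{\leftarrow}(i_{YM}(v))\le i_{XL}((f,\phi)^{\leftarrow}(v))$ for all $v\in M^Y$. VBIO-SET is the category whose objects are triples $(X,L,i_{XL})$ with $(X,L)\in\mathrm{SET}\times\mathcal D$ and $i_{XL}$ an interior map on $(X,L)$, whose morphisms are the fuzzy $I$-continuous morphisms, with identities and composition as in $\mathrm{SET}\times\mathcal D$. A $U$-initial lift of such a structured source is an object $(X,L,i)$ of VBIO-SET such that all $(f_\lambda,\phi_\lambda):(X,L,i)\to(Y_\lambda,M_\lambda,i_{Y_\lambda M_\lambda})$ are VBIO-SET morphisms and, for every object $(Z,N,i_{ZN})$ and every $\mathrm{SET}\times\mathcal D$-morphism $(g,\psi):(Z,N)\to(X,L)$, $(g,\psi)$ is a VBIO-SET morphism $(Z,N,i_{ZN})\to(X,L,i)$ if and only if each $(f_\lambda,\phi_\lambda)\circ(g,\psi)$ is a VBIO-SET morphism. *)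

From Stdlib Require Import Classical FunctionalExtensionality.



Record cqmLattice := CQM {
  car :> Type;
  le : car -> car -> Prop;
  le_refl : forall x, le x x;
  le_trans : forall x y z, le x y -> le y z -> le x z;
  le_antisym : forall x y, le x y -> le y x -> x = y;
  sup : (car -> Prop) -> car;
  sup_ub : forall (S : car -> Prop) x, S x -> le x (sup S);
  sup_least : forall (S : car -> Prop) y, (forall x, S x -> le x y) -> le (sup S) y;
  top : car;
  top_greatest : forall x, le x top;
  tens : car -> car -> car;
  tens_mono : forall a b c d, le a b -> le c d -> le (tens a c) (tens b d);
  tens_top : tens top top = top
}.

Definition cqml_hom (L M : cqmLattice) (h : L -> M) : Prop :=
  (forall a b, h (tens L a b) = tens M (h a) (h b)) /\
  h (top L) = top M /\
  (forall S : L -> Prop, h (sup L S) = sup M (fun y => exists x, S x /\ y = h x)).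

Record subcat := SubCat {
  DObj : cqmLattice -> Prop;
  DHom : forall L M : cqmLattice, (L -> M) -> Prop;
  DHom_cqml : forall (L M : cqmLattice) (h : L -> M), DHom L M h -> @cqml_hom L M h;
  DHom_dom : forall (L M : cqmLattice) (h : L -> M), DHom L M h -> DObj L /\ DObj M;
  DHom_id : forall L : cqmLattice, DObj L -> DHom L L (fun x => x);
  DHom_comp : forall (L M N : cqmLattice) (h : L -> M) (k : M -> N),
      DHom L M h -> DHom M N k -> DHom L N (fun x => k (h x))
}.
Arguments DHom : clear implicits.

Definition lef {X : Type} {L : cqmLattice} (u v : X -> L) : Prop :=
  forall x, le L (u x) (v x).

Arguments lef : clear implicits.
Arguments lef {X L}.
Definition one (X : Type) (L : cqmLattice) : X -> L := fun _ => top L.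

Definition interior {X : Type} {L : cqmLattice} (i : (X -> L) -> (X -> L)) : Prop :=
  (forall u, lef (i u) u) /\
  (forall u v, lef u v -> lef (i u) (i v)) /\
  i (one X L) = one X L.

(** Backward operator of (f,phi) : (X,L) -> (Y,M), where phi = phi^op : M -> L. *)
Definition bw {X Y : Type} {L M : cqmLattice} (f : X -> Y) (phi : M -> L)
  (b : Y -> M) : X -> L := fun x => phi (b (f x)).

Definition Icont {X Y : Type} {L M : cqmLattice}
  (iX : (X -> L) -> (X -> L)) (iY : (Y -> M) -> (Y -> M))
  (f : X -> Y) (phi : M -> L) : Prop :=
  forall v : Y -> M, lef (bw f phi (iY v)) (iX (bw f phi v)).

Definition vbio_hom (D : subcat) {X Y : Type} {L M : cqmLattice}
  (iX : (X -> L) -> (X -> L)) (iY : (Y -> M) -> (Y -> M))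
  (f : X -> Y) (phi : M -> L) : Prop :=
  DHom D M L phi /\ Icont iX iY f phi.

Definition initial_lift (D : subcat) {X : Type} {L : cqmLattice}
  {Lam : Type} (Y : Lam -> Type) (M : Lam -> cqmLattice)
  (iY : forall l, (Y l -> M l) -> (Y l -> M l))
  (f : forall l, X -> Y l) (phi : forall l, M l -> L)
  (i : (X -> L) -> (X -> L)) : Prop :=
  interior i /\
  (forall l, vbio_hom D i (iY l) (f l) (phi l)) /\
  (forall (Z : Type) (N : cqmLattice) (iZ : (Z -> N) -> (Z -> N)),
     DObj D N -> interior iZ ->
     forall (g : Z -> X) (psi : L -> N), DHom D L N psi ->
       (vbio_hom D iZ i g psi <->
        forall l, vbio_hom D iZ (iY l) (fun z => f l (g z)) (fun m => psi (phi l m)))).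

(** Given a structured source (f_l, phi_l) : (X,L) -> (Y_l, M_l) with interior
    maps iY_l, the initial interior map on (X,L) is the smallest (coarsest)
    one making every (f_l, phi_l) continuous:
      i u = sup ({1_X | u = 1_X} u {bw_l (iY_l v) | bw_l v <= u}),
    where bw_l = (f_l, phi_l)^<-.  Finally, any two initial lifts
    coincide, since each lies below the other (test with the identity). *)

From Stdlib Require Import FunctionalExtensionality.

(** A CQML morphism preserves binary joins, hence it is monotone. *)
Lemma cqml_hom_mono {L M : cqmLattice} {h : L -> M} : cqml_hom L M h ->
  forall a b, le L a b -> le M (h a) (h b).
Proof.
  intros [_ [_ h_sup]] a b le_ab.
  assert (join_ab : sup L (fun x => x = a \/ x = b) = b).
  { apply le_antisym.
    - apply sup_least. intros x [-> | ->]; [exact le_ab | apply le_refl].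
    - apply sup_ub. now right. }
  rewrite <- join_ab, h_sup. apply sup_ub. exists a. split; auto.
Qed.

Lemma DHom_mono (D : subcat) {L M : cqmLattice} {h : L -> M} :
  DHom D L M h -> forall a b, le L a b -> le M (h a) (h b).
Proof. intros Hh. exact (cqml_hom_mono (DHom_cqml D L M h Hh)). Qed.

Lemma lef_antisym (X : Type) (L : cqmLattice) (u v : X -> L) :
  lef u v -> lef v u -> u = v.
Proof.
  intros le_uv le_vu. apply functional_extensionality. intro x.
  apply le_antisym; [apply le_uv | apply le_vu].
Qed.

Lemma lef_one_eq (X : Type) (L : cqmLattice) (u : X -> L) :
  lef (one X L) u -> u = one X L.
Proof. intros H. apply lef_antisym; [intro x; apply top_greatest | exact H]. Qed.

Lemma Icont_comp {X Y Z : Type} {L M N : cqmLattice}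
  {iX : (X -> L) -> X -> L} {iY : (Y -> M) -> Y -> M}
  {iZ : (Z -> N) -> Z -> N} {f : X -> Y} {phi : M -> L}
  {g : Z -> X} {psi : L -> N} :
  (forall a b, le L a b -> le N (psi a) (psi b)) ->
  Icont iX iY f phi -> Icont iZ iX g psi ->
  Icont iZ iY (fun z => f (g z)) (fun m => psi (phi m)).
Proof.
  intros psi_mono f_cont g_cont v z.
  eapply le_trans; [apply psi_mono, (f_cont v (g z)) | exact (g_cont (bw f phi v) z)].
Qed.

Section InitialInterior.

Variables (X : Type) (L : cqmLattice) (Lam : Type).
Variables (Y : Lam -> Type) (M : Lam -> cqmLattice).
Variable iY : forall l, (Y l -> M l) -> Y l -> M l.
Hypothesis iY_interior : forall l, interior (iY l).
Variables (f : forall l, X -> Y l) (phi : forall l, M l -> L).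
Hypothesis phi_mono : forall l a b, le (M l) a b -> le L (phi l a) (phi l b).

(** The values whose supremum is the initial interior of u at x: the top
    when u = 1_X (forced by (I3)), and bw_l (iY_l v) at x for every v whose
    pullback bw_l v lies below u. *)
Definition initial_generators (u : X -> L) (x : X) (a : L) : Prop :=
  (u = one X L /\ a = top L) \/
  exists l v, lef (bw (f l) (phi l) v) u /\ a = phi l (iY l v (f l x)).

Definition initial_interior (u : X -> L) : X -> L :=
  fun x => sup L (initial_generators u x).

Lemma initial_interior_interior : interior initial_interior.
Proof.
  split; [| split].
  - intros u x. apply sup_least. intros a [[-> ->] | [l [v [le_vu ->]]]].
    + apply le_refl.
    + eapply le_trans; [apply phi_mono, (proj1 (iY_interior l)) | apply le_vu].
  - intros u w le_uw x. apply sup_least.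
    intros a [[-> ->] | [l [v [le_vu ->]]]]; apply sup_ub.
    + left. split; [apply lef_one_eq; exact le_uw | reflexivity].
    + right. exists l, v. split; [| reflexivity].
      intro y. eapply le_trans; [apply le_vu | apply le_uw].
  - apply lef_antisym; intro x; [apply top_greatest |].
    apply sup_ub. left. auto.
Qed.

Lemma initial_interior_cont (l : Lam) :
  Icont initial_interior (iY l) (f l) (phi l).
Proof.
  intros v x. apply sup_ub. right. exists l, v.
  split; [intro y; apply le_refl | reflexivity].
Qed.

Lemma initial_interior_universal (Z : Type) (N : cqmLattice)
  (iZ : (Z -> N) -> Z -> N) (g : Z -> X) (psi : L -> N) :
  interior iZ -> cqml_hom L N psi ->
  (forall l, Icont iZ (iY l) (fun z => f l (g z)) (fun m => psi (phi l m))) ->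
  Icont iZ initial_interior g psi.
Proof.
  intros [_ [iZ_mono iZ_one]] psi_hom comp_cont u z.
  pose proof (cqml_hom_mono psi_hom) as psi_mono.
  destruct psi_hom as [_ [psi_top psi_sup]].
  unfold bw at 1, initial_interior. rewrite psi_sup.
  apply sup_least. intros b [a [Ha ->]].
  destruct Ha as [[-> ->] | [l [v [le_vu ->]]]].
  - assert (bw_one : bw g psi (one X L) = one Z N).
    { apply functional_extensionality. intro. exact psi_top. }
    rewrite psi_top, bw_one, iZ_one. apply le_refl.
  - eapply le_trans; [apply (comp_cont l v z) |].
    apply iZ_mono. intro z'. apply psi_mono, le_vu.
Qed.

End InitialInterior.

Arguments initial_interior {X L Lam Y M} iY f phi u x.
Arguments initial_interior_interior {X L Lam Y M iY} iY_interior {f phi} phi_mono.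
Arguments initial_interior_cont {X L Lam Y M} iY f phi l v x.
Arguments initial_interior_universal {X L Lam Y M iY f phi Z N iZ g psi}.

(** An initial lift lies below every interior map making the source
    continuous: the identity of (X,L) is then continuous into the lift. *)
Lemma initial_lift_coarsest {D : subcat} {X : Type} {L : cqmLattice}
  {Lam : Type} {Y : Lam -> Type} {M : Lam -> cqmLattice}
  {iY : forall l, (Y l -> M l) -> Y l -> M l}
  {f : forall l, X -> Y l} {phi : forall l, M l -> L}
  {i j : (X -> L) -> X -> L} :
  DObj D L -> initial_lift D Y M iY f phi i -> interior j ->
  (forall l, vbio_hom D j (iY l) (f l) (phi l)) -> forall u, lef (i u) (j u).
Proof.
  intros DL [_ [_ i_univ]] j_int j_src u.
  destruct (proj2 (i_univ X L j DL j_int (fun x => x) (fun a => a)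
                    (DHom_id D L DL)) j_src) as [_ id_cont].
  exact (id_cont u).
Qed.

Lemma initial_lift_unique {D : subcat} {X : Type} {L : cqmLattice}
  {Lam : Type} {Y : Lam -> Type} {M : Lam -> cqmLattice}
  {iY : forall l, (Y l -> M l) -> Y l -> M l}
  {f : forall l, X -> Y l} {phi : forall l, M l -> L}
  {i j : (X -> L) -> X -> L} :
  DObj D L -> initial_lift D Y M iY f phi i ->
  initial_lift D Y M iY f phi j -> i = j.
Proof.
  intros DL i_lift j_lift.
  apply functional_extensionality. intro u.
  apply lef_antisym.
  - apply (initial_lift_coarsest DL i_lift); apply j_lift.
  - apply (initial_lift_coarsest DL j_lift); apply i_lift.
Qed.

Lemma initial_interior_lift (D : subcat) {X : Type} {L : cqmLattice}
  {Lam : Type} {Y : Lam -> Type} {M : Lam -> cqmLattice}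
  (iY : forall l, (Y l -> M l) -> Y l -> M l)
  (f : forall l, X -> Y l) (phi : forall l, M l -> L) :
  (forall l, interior (iY l)) -> (forall l, DHom D (M l) L (phi l)) ->
  initial_lift D Y M iY f phi (initial_interior iY f phi).
Proof.
  intros iY_int phi_hom.
  pose proof (fun l => DHom_mono D (phi_hom l)) as phi_mono.
  split; [exact (initial_interior_interior iY_int phi_mono) | split].
  - intro l. split; [apply phi_hom | apply initial_interior_cont].
  - intros Z N iZ _ iZ_int g psi psi_hom. split.
    + intros [_ g_cont] l. split.
      * exact (DHom_comp D _ _ _ _ _ (phi_hom l) psi_hom).
      * exact (Icont_comp (DHom_mono D psi_hom)
                 (initial_interior_cont iY f phi l) g_cont).
    + intros comp_hom. split; [exact psi_hom |].
      apply initial_interior_universal; [exact iZ_int | |].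
      * exact (DHom_cqml D _ _ _ psi_hom).
      * intro l. apply comp_hom.
Qed.

Theorem mainTheorem5 :
  forall (D : subcat) (X : Type) (L : cqmLattice), DObj D L ->
  forall (Lam : Type) (Y : Lam -> Type) (M : Lam -> cqmLattice),
  (forall l, DObj D (M l)) ->
  forall (iY : forall l, (Y l -> M l) -> (Y l -> M l)),
  (forall l, interior (iY l)) ->
  forall (f : forall l, X -> Y l) (phi : forall l, M l -> L),
  (forall l, DHom D (M l) L (phi l)) ->
  exists! i : (X -> L) -> (X -> L), initial_lift D Y M iY f phi i.
Proof.
  intros D X L DL Lam Y M _ iY iY_int f phi phi_hom.
  pose proof (initial_interior_lift D iY f phi iY_int phi_hom) as lift.
  exists (initial_interior iY f phi).
  split; [exact lift | intros j; exact (initial_lift_unique DL lift)].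
Qed.
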